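(* Let $\mathbf{K}$ be a finite field of characteristic $p>3$, let $(\alpha,\beta)\in\mathbf{K}^2$, let $G\in\mathbf{K}[[x]]$ be a formal power series and $H\in\mathbf{K}[z]$ a polynomial such that $H(\alpha)=1$ and $\beta^2=G(0)\neq 0$. Let $\mu\in\{1,\dots,p\}$. Then the following algorithm, on input $(\mu,(\alpha,\beta),H,G)$, returns the Taylor series modulo $x^\mu$ of the solution $S$ of the differential equation $$S'(x)^2=G(x)\,H(S(x)),\qquad S(0)=\alpha,\qquad S'(0)=\beta.$$ Algorithm: set $d\leftarrow 2$, $U\leftarrow 1/\beta$, $J\leftarrow 1$, $V\leftarrow 1$, and $S\leftarrow \alpha+\beta x+\big[(G'(0)+H'(\alpha)\beta^3)/(4\beta)\big]x^2$. While $d<\mu-1$, perform in order: $U\leftarrow U\cdot(2-S'\cdot U)\bmod x^d$; $V\leftarrow \big(V+J\cdot(H\circ S)\cdot(2-V\cdot J)\big)/2\bmod x^d$; $J\leftarrow J\cdot(2-V\cdot J)\bmod x^d$; $S\leftarrow S+V\cdot\int\big(G\cdot(H\circ S)-S'^2\big)\,\big(U\cdot J/2\big)\,dx\bmod x^{\min(2d+1,\mu)}$; $d\leftarrow 2d$. Finally return $S$.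
   Context: Here $'$ denotes the formal derivative with respect to $x$ (for $H$, with respect to $z$), $H\circ S$ is the composition $H(S(x))$, and $\int F\,dx$ denotes the formal antiderivative with zero constant term, $\int\sum_i c_i x^i\,dx=\sum_i \frac{c_i}{i+1}x^{i+1}$. All operations are on truncated power series over $\mathbf{K}$. *)

From mathcomp Require Import all_boot all_order all_algebra.
Set Implicit Arguments. Unset Strict Implicit. Unset Printing Implicit Defensive.
Import Order.TTheory GRing.Theory Num.Theory.
Local Open Scope ring_scope.

Section Newton.
Variable K : fieldType.

(* A formal power series in K[[x]] is represented by its coefficient function. *)
Definition series := nat -> K.

Definition trunc_series (n : nat) (F : series) : {poly K} := \poly_(i < n) F i.

Definition pint (F : {poly K}) : {poly K} :=
  \poly_(i < (size F).+1) (if i is j.+1 then F`_j / j.+1%:R else 0).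

(* S is a solution modulo x^mu of S'^2 = G * H(S), S(0)=alpha, S'(0)=beta :
   the equation holds modulo x^(mu-1) (all that S mod x^mu can determine). *)
Definition is_solution_mod (mu : nat) (alpha beta : K) (H : {poly K})
    (G S : series) : Prop :=
  [/\ S 0%N = alpha, S 1%N = beta &
      take_poly (mu.-1)
        ((trunc_series mu S)^`() ^+ 2
         - trunc_series mu G * (H \Po trunc_series mu S)) = 0].

Record nstate := NState { st_d : nat; st_U : {poly K}; st_J : {poly K};
                          st_V : {poly K}; st_S : {poly K} }.

Section Algo.
Variables (mu : nat) (alpha beta : K) (H : {poly K}) (G : series).

Let Gm := trunc_series mu G.

Definition nstep (st : nstate) : nstate :=
  let: NState d U J V S0 := st in
  let U' := take_poly d (U * (2 - S0^`() * U)) in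
  let V' := take_poly d ((2^-1 : K) *: (V + J * (H \Po S0) * (2 - V * J))) in
  let J' := take_poly d (J * (2 - V' * J)) in
  let S' := take_poly (minn (2 * d).+1 mu)
              (S0 + V' * pint ((Gm * (H \Po S0) - S0^`() ^+ 2)
                              * ((2^-1 : K) *: (U' * J')))) in
  NState (2 * d) U' J' V' S'.

(* while d < mu - 1 do body; fuel mu is more than enough since d doubles. *)
Fixpoint nloop (fuel : nat) (st : nstate) : nstate :=
  if fuel is n.+1 then
    if (st_d st < mu.-1)%N then nloop n (nstep st) else st
  else st.

Definition ninit : nstate :=
  NState 2 (beta^-1)%:P 1 1
    (alpha%:P + beta *: 'X
     + ((G 1%N + (H^`()).[alpha] * beta ^+ 3) / (4 * beta)) *: 'X^2).

Definition newton_output : {poly K} := st_S (nloop mu ninit).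

End Algo.
End Newton.

From mathcomp Require Import all_boot all_order all_algebra.
From mathcomp Require Import ring zify.
Set Implicit Arguments. Unset Strict Implicit. Unset Printing Implicit Defensive.
Import GRing.Theory.
Local Open Scope ring_scope.

(* Write E(S) = G H(S) - S'^2 and let each pass double the precision d.  U, J and
   V are Newton iterates for 1/S', 1/V and a square root of H(S), so the
   precision d/2 they enter with becomes d.  If e = O(x^(d+1)) then, up to order
   2d, E(S + e) = E(S) + G H'(S) e - 2 S' e'.  For e = V P, differentiating
   V^2 = H(S) shows that G H'(S) V - 2 S' V' = O(x^(d-1)), so the first-order
   term reduces to -2 S' V P', which cancels E(S) because P' = E U J / 2 and
   U J ~ 1 / (S' V).  Computing P divides by 1, ..., mu - 1, whence mu <= p.
   Uniqueness goes coefficient by coefficient: if two solutions differ by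
   x^(k+1) q, the coefficient of x^k in the difference of their defects is
   -(k + 1) q_0 (2 beta), which forces q_0 = 0. *)

Section DvdpXn.
Variable K : fieldType.
Implicit Types a b u v w j P : {poly K}.

Lemma dvdp_Xn_take n a : ('X^n %| a) = (take_poly n a == 0).
Proof. by rewrite /dvdp Pdiv.IdomainMonic.take_poly_modp. Qed.

Lemma dvdp_XnP n a : reflect (forall i, (i < n)%N -> a`_i = 0) ('X^n %| a).
Proof.
rewrite dvdp_Xn_take; apply: (iffP eqP) => [/polyP h i hi | h].
  by move: (h i); rewrite coef_take_poly hi coef0.
by apply/polyP => i; rewrite coef_take_poly coef0; case: ifP => // /h.
Qed.

Lemma dvdp_Xn_take_sub n a : 'X^n %| take_poly n a - a.
Proof. by apply/dvdp_XnP => i hi; rewrite coefB coef_take_poly hi subrr. Qed.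

Lemma dvdp_XnW m n a : (m <= n)%N -> 'X^n %| a -> 'X^m %| a.
Proof. by move=> mn; apply: dvdp_trans (dvdp_exp2l 'X mn). Qed.

Lemma dvdp_XnM m n a b : 'X^m %| a -> 'X^n %| b -> 'X^(m + n) %| a * b.
Proof. by rewrite exprD; apply: dvdp_mul. Qed.

Lemma dvdp_Xn_deriv n a : 'X^(n.+1) %| a -> 'X^n %| a^`().
Proof.
by move=> /dvdp_XnP ha; apply/dvdp_XnP => i hi; rewrite coef_deriv ha ?mul0rn.
Qed.

Lemma comp_poly_taylor P b a :
  exists R, P \Po (b + a) = P \Po b + (P^`() \Po b) * a + a ^+ 2 * R.
Proof.
elim/poly_ind: P => [|Q c [R IH]].
  by exists 0; rewrite !comp_poly0 deriv0 comp_poly0; ring.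
exists ((Q^`() \Po b) + R * (b + a)).
rewrite derivMXaddC !comp_polyD !comp_polyM !comp_polyX !comp_polyC IH.
ring.
Qed.

Lemma dvdp_comp_sub P a b : a - b %| (P \Po a) - (P \Po b).
Proof.
have [R] := comp_poly_taylor P b (a - b); rewrite [b + _]addrC subrK => ->.
have -> : P \Po b + (P^`() \Po b) * (a - b) + (a - b) ^+ 2 * R - (P \Po b)
    = (a - b) * ((P^`() \Po b) + (a - b) * R) by ring.
exact: dvdp_mulIl.
Qed.

Lemma dvdp_X2_comp P c a : a`_0 = 0 ->
  'X^2 %| P \Po (c%:P + a) - ((P.[c])%:P + P^`().[c] *: a).
Proof.
move=> a0; have [R ->] := comp_poly_taylor P c%:P a.
rewrite !comp_polyCr mul_polyC.
have -> : (P.[c])%:P + P^`().[c] *: a + a ^+ 2 * R - ((P.[c])%:P + P^`().[c] *: a)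
  = a ^+ 2 * R by ring.
have aX : 'X^1 %| a by apply/dvdp_XnP => -[|].
by apply/dvdp_mulr; rewrite expr2; exact: (dvdp_XnM aX aX).
Qed.

Section NewtonIterations.
Hypothesis two_neq0 : (2 : K) != 0.

Lemma dvdp_Xn_newton_inv h d u a : (d <= h + h)%N -> 'X^h %| u * a - 1 ->
  'X^d %| take_poly d (u * (2 - a * u)) * a - 1.
Proof.
move=> dh hu; set u' := take_poly d _.
have -> : u' * a - 1 = (u' - u * (2 - a * u)) * a - (u * a - 1) ^+ 2 by ring.
apply: dvdp_sub; first exact/dvdp_mulr/dvdp_Xn_take_sub.
by apply: dvdp_XnW dh _; rewrite expr2; apply: dvdp_XnM.
Qed.

Lemma dvdp_Xn_newton_sqrt h d v j w : (h <= d <= h + h)%N ->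
    'X^h %| v ^+ 2 - w -> 'X^h %| v * j - 1 ->
  let v' := take_poly d (2^-1 *: (v + j * w * (2 - v * j))) in
  'X^h %| v' - v /\ 'X^d %| v' ^+ 2 - w.
Proof.
move=> /andP[hd dh] hv hj v'.
(* [C] stands for 1/2; the [2 C - 1] summands below let [ring] check the identities. *)
set C : {poly K} := (2^-1)%:P; set A := C * (v + j * w * (2 - v * j)).
have C2 : 2 * C - 1 = 0 by rewrite -polyC_natr -polyCM divff // subrr.
have tv : 'X^d %| v' - A by rewrite /A mul_polyC; apply: dvdp_Xn_take_sub.
set j2 := j * (2 - v * j).
have hj2 : 'X^(h + h) %| v * j2 - 1.
  have -> : v * j2 - 1 = - (v * j - 1) ^+ 2 by rewrite /j2; ring.
  by rewrite dvdpNr expr2; apply: dvdp_XnM.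
have hj2' : 'X^h %| v * j2 - 1 := dvdp_XnW (leq_addr h h) hj2.
have hvw : 'X^h %| v - w * j2.
  have -> : v - w * j2 = j2 * (v ^+ 2 - w) - v * (v * j2 - 1) by ring.
  by apply: dvdp_sub; apply: dvdp_mull.
split.
  have -> : v' - v = (v' - A) + C * (j2 * (w - v ^+ 2) + v * (v * j2 - 1))
      + (2 * C - 1) * v by rewrite /A /j2; ring.
  rewrite C2 mul0r addr0; apply: dvdp_add; first exact: dvdp_XnW hd tv.
  by apply/dvdp_mull/dvdp_add; apply: dvdp_mull; rewrite // -opprB dvdpNr.
have -> : v' ^+ 2 - w = (v' - A) * (v' + A) + C ^+ 2 * (v - w * j2) ^+ 2
    + w * (v * j2 - 1) + (2 * C - 1) * (2 * C + 1) * (v * w * j2)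
  by rewrite /A /j2; ring.
rewrite C2 !mul0r addr0; apply: dvdp_add; last by apply/dvdp_mull/(dvdp_XnW dh).
apply: dvdp_add; first exact: dvdp_mulr tv.
by apply/dvdp_mull/(dvdp_XnW dh); rewrite expr2; apply: dvdp_XnM.
Qed.

End NewtonIterations.
End DvdpXn.

Section Defect.
Variable K : fieldType.
Implicit Types g H S T v j e : {poly K}.

Definition defect g H S := g * (H \Po S) - S^`() ^+ 2.

Lemma dvdp_defect_sub n g H S T : 'X^(n.+1) %| S - T ->
  'X^n %| defect g H S - defect g H T.
Proof.
move=> hST.
have -> : defect g H S - defect g H T
    = g * ((H \Po S) - (H \Po T)) - (S - T)^`() * (S^`() + T^`())
  by rewrite /defect derivB; ring.
apply: dvdp_sub; last exact/dvdp_mulr/dvdp_Xn_deriv.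
apply/dvdp_mull/(dvdp_XnW (leqnSn n)).
exact: dvdp_trans hST (dvdp_comp_sub H S T).
Qed.

Lemma defect_linearize n g H S e : 'X^(n.+1) %| e ->
  'X^(n + n) %| defect g H (S + e) - defect g H S
                - (g * (H^`() \Po S) * e - 2 * S^`() * e^`()).
Proof.
move=> he; rewrite /defect; have [R ->] := comp_poly_taylor H S e.
have -> : g * ((H \Po S) + (H^`() \Po S) * e + e ^+ 2 * R) - (S + e)^`() ^+ 2
    - (g * (H \Po S) - S^`() ^+ 2) - (g * (H^`() \Po S) * e - 2 * S^`() * e^`())
    = g * e ^+ 2 * R - e^`() ^+ 2 by rewrite derivD; ring.
have eX : 'X^(n + n) %| e ^+ 2.
  by apply: dvdp_XnW (dvdp_XnM he he); lia.
apply: dvdp_sub; first exact/dvdp_mulr/dvdp_mull.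
by rewrite expr2; apply: dvdp_XnM; apply: dvdp_Xn_deriv.
Qed.

(* Differentiating v^2 = H(S) gives 2 v v' = H'(S) S', and g H(S) = S'^2. *)
Lemma dvdp_Xn_sqrt_deriv d g H S v j :
    'X^d %| v ^+ 2 - (H \Po S) -> 'X^d %| defect g H S -> 'X^d %| v * j - 1 ->
  'X^(d.-1) %| g * (H^`() \Po S) * v - 2 * S^`() * v^`().
Proof.
case: d => [|d] hv hE hj; first by rewrite expr0 dvd1p.
set X := g * (H^`() \Po S) * v - 2 * S^`() * v^`().
have hvX : 'X^d %| v * X.
  have -> : v * X = g * (H^`() \Po S) * (v ^+ 2 - (H \Po S)) + (H^`() \Po S) * defect g H S
      - S^`() * (v ^+ 2 - (H \Po S))^`()
    by rewrite /X /defect derivB deriv_comp expr2 derivM; ring.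
  apply: dvdp_sub; last exact/dvdp_mull/dvdp_Xn_deriv.
  by apply: dvdp_add; apply/dvdp_mull/(dvdp_XnW (leqnSn d)).
have -> : X = j * (v * X) - (v * j - 1) * X by ring.
by apply: dvdp_sub; [apply: dvdp_mull | apply/dvdp_mulr/(dvdp_XnW (leqnSn d))].
Qed.

End Defect.

Section PositiveCharacteristic.
Variables (K : fieldType) (p : nat).
Hypotheses (hp : p \in [pchar K]) (p2 : (2 < p)%N).
Implicit Types F g H S A B u v j : {poly K}.

Lemma natr_pchar_neq0 k : (0 < k < p)%N -> k%:R != 0 :> K.
Proof.
case/andP=> k0 kp; rewrite -(dvdn_pcharf hp).
by apply/negP => /(dvdn_leq k0); rewrite leqNgt kp.
Qed.

Lemma two_neq0 : (2 : K) != 0.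
Proof. by apply: natr_pchar_neq0; rewrite p2. Qed.

Lemma coef_pint F i : (pint F)`_i = if i is j.+1 then F`_j / j.+1%:R else 0.
Proof.
rewrite /pint coef_poly; case: i => [|j] /=; first by rewrite ?if_same.
by case: ltnP => // hj; rewrite nth_default ?mul0r.
Qed.

Lemma dvdp_Xn_pint n F : 'X^n %| F -> 'X^(n.+1) %| pint F.
Proof.
move/dvdp_XnP=> hF; apply/dvdp_XnP => -[|i] hi; rewrite coef_pint //.
by rewrite hF ?mul0r.
Qed.

Lemma pint_deriv F : 'X^(p.-1) %| (pint F)^`() - F.
Proof.
apply/dvdp_XnP => i hi.
rewrite coefB coef_deriv coef_pint -[_ *+ i.+1]mulr_natr divfK ?subrr //.
by apply: natr_pchar_neq0; lia.
Qed.

(* The first-order part of the defect at [S + v P] is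
   [E (1 - (u S') (v j)) + (g H'(S) v - 2 S' v') P - 2 S' v (P' - E u j / 2)]. *)
Lemma defect_newton_correction k d g H S u v j :
    (k <= d + d)%N -> (k <= p.-1)%N ->
    'X^d %| defect g H S -> 'X^d %| u * S^`() - 1 ->
    'X^d %| v ^+ 2 - (H \Po S) -> 'X^d %| v * j - 1 ->
  'X^k %| defect g H (S + v * pint (defect g H S * (2^-1 *: (u * j)))).
Proof.
move=> kd kp hE hu hv hj.
set E := defect g H S; set C : {poly K} := (2^-1)%:P.
rewrite -mul_polyC -/C; set P := pint _.
have C2 : 2 * C - 1 = 0 by rewrite -polyC_natr -polyCM divff ?two_neq0 ?subrr.
have hP : 'X^(d.+1) %| P by apply/dvdp_Xn_pint/dvdp_mulr.
have hvP : 'X^(d.+1) %| v * P by apply: dvdp_mull.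
have -> : defect g H (S + v * P)
    = (defect g H (S + v * P) - E - (g * (H^`() \Po S) * (v * P) - 2 * S^`() * (v * P)^`()))
      + E * (1 - (u * S^`()) * (v * j))
      + (g * (H^`() \Po S) * v - 2 * S^`() * v^`()) * P
      - 2 * S^`() * v * (P^`() - E * (C * (u * j)))
      - (2 * C - 1) * (E * (u * S^`()) * (v * j)) by rewrite derivM; ring.
rewrite C2 mul0r subr0; apply: dvdp_sub; last exact/dvdp_mull/(dvdp_XnW kp)/pint_deriv.
have h1 : 'X^d %| 1 - (u * S^`()) * (v * j).
  have -> : 1 - (u * S^`()) * (v * j) = - (u * S^`() - 1) - u * S^`() * (v * j - 1) by ring.
  by apply: dvdp_sub; [rewrite dvdpNr | apply: dvdp_mull].
apply: (dvdp_XnW kd); apply: dvdp_add; [apply: dvdp_add|].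
- exact: defect_linearize hvP.
- exact: dvdp_XnM hE h1.
- apply: dvdp_XnW (dvdp_XnM (dvdp_Xn_sqrt_deriv hv hE hj) hP); lia.
Qed.

Lemma dvdp_Xn_sub_lift k g H A B : (k.+1 < p)%N -> A`_1 + B`_1 != 0 ->
    'X^(k.+1) %| defect g H A - defect g H B -> 'X^(k.+1) %| A - B ->
  'X^(k.+2) %| A - B.
Proof.
move=> kp hAB hE /dvdpP[q hq].
set Z := q *+ k.+1 + 'X * q^`().
have hd : (A - B)^`() = 'X^k * Z.
  by rewrite hq derivM derivXn /Z exprS; ring.
have hZ : 'X^(k.+1) %| 'X^k * (Z * (A^`() + B^`())).
  have -> : 'X^k * (Z * (A^`() + B^`()))
      = g * ((H \Po A) - (H \Po B)) - (defect g H A - defect g H B).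
    by rewrite mulrA -hd /defect derivB; ring.
  apply: dvdp_sub => //; apply: dvdp_mull.
  by apply: dvdp_trans (dvdp_comp_sub H A B); rewrite hq dvdp_mulIr.
move: hZ; rewrite exprSr dvdp_mul2l ?expf_neq0 ?polyX_eq0 //.
move=> /(dvdp_XnP 1)/(_ 0%N isT).
rewrite coef0M /Z !coefD coefMn coefXM addr0 !coef_deriv -mulr_natr !mulr1n => /eqP.
rewrite !mulf_eq0 (negbTE hAB) (negbTE (natr_pchar_neq0 _)) ?orbF => [/eqP q0|]; last by lia.
rewrite hq exprS; apply: dvdp_mul => //.
by apply/(dvdp_XnP 1) => -[|].
Qed.

Lemma defect_uniq n g H A B : (n < p)%N -> A`_0 = B`_0 -> A`_1 + B`_1 != 0 ->
    'X^n %| defect g H A -> 'X^n %| defect g H B ->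
  'X^(n.+1) %| A - B.
Proof.
move=> np h0 h1 hA hB; have hE := dvdp_sub hA hB.
suff: forall k, (k <= n)%N -> 'X^(k.+1) %| A - B by apply.
elim=> [|k IH] kn; first by apply/dvdp_XnP => -[|] //; rewrite coefB h0 subrr.
apply: dvdp_Xn_sub_lift h1 _ (IH (ltnW kn)); [lia | exact: dvdp_XnW kn hE].
Qed.

End PositiveCharacteristic.

Section NewtonAlgorithm.
Variables (K : fieldType) (p mu : nat) (alpha beta : K) (G : series K) (H : {poly K}).
Hypotheses (hp : p \in [pchar K]) (p2 : (2 < p)%N) (Ha : H.[alpha] = 1)
  (hb : beta ^+ 2 = G 0%N) (hG0 : G 0%N != 0) (mu1 : (1 <= mu)%N) (mup : (mu <= p)%N).

Local Notation Gm := (trunc_series mu G).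

Definition newton_inv (st : nstate K) : Prop :=
  let: NState d U J V Sx := st in
  [/\ (2 <= d)%N,
      exists2 h, (h <= d <= h + h)%N &
        [/\ 'X^h %| U * Sx^`() - 1, 'X^h %| V ^+ 2 - (H \Po Sx) & 'X^h %| V * J - 1],
      'X^(minn d mu.-1) %| defect Gm H Sx &
      'X^2 %| Sx - (alpha%:P + beta *: 'X)].

Lemma newton_step_inv st : newton_inv st -> (st_d st < mu.-1)%N ->
  newton_inv (nstep mu H G st).
Proof.
case: st => d U J V Sx [d2 [h hd [hU hV hJ]] hE hS] /= dmu.
have [kd kp kS dk] : [/\ minn (2 * d) mu.-1 <= d + d, minn (2 * d) mu.-1 <= p.-1,
    (minn (2 * d) mu.-1).+1 = minn (2 * d).+1 mu & d.+1 <= (minn (2 * d) mu.-1).+1]%N.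
  by split; lia.
have [d2' dd] : (1 < 2 * d)%N /\ (d <= 2 * d <= d + d)%N by split; lia.
have {}hE : 'X^d %| defect Gm H Sx by rewrite -(minn_idPl (ltnW dmu)).
have hU' := dvdp_Xn_newton_inv (proj2 (andP hd)) hU.
have [hVV hV'] := dvdp_Xn_newton_sqrt (two_neq0 hp p2) hd hV hJ.
set V' := take_poly d (2^-1 *: _) in hVV hV' *.
have hJV : 'X^h %| J * V' - 1.
  have -> : J * V' - 1 = (V' - V) * J + (V * J - 1) by ring.
  by apply: dvdp_add => //; apply: dvdp_mulr.
have hJ' := dvdp_Xn_newton_inv (proj2 (andP hd)) hJV.
set U' := take_poly d (U * _) in hU' *; set J' := take_poly d (J * _) in hJ' *.
rewrite mulrC in hJ'.
set D := Sx + V' * _.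
have hD : 'X^(minn (2 * d) mu.-1) %| defect Gm H D.
  exact: (defect_newton_correction hp p2 kd kp).
have hDS : 'X^(d.+1) %| D - Sx.
  by rewrite /D addrC addKr; apply/dvdp_mull/dvdp_Xn_pint/dvdp_mulr.
set S' := take_poly _ D.
have hS'D : 'X^((minn (2 * d) mu.-1).+1) %| S' - D.
  by rewrite kS; apply: dvdp_Xn_take_sub.
have hS'S : 'X^(d.+1) %| S' - Sx.
  have -> : S' - Sx = (S' - D) + (D - Sx) by ring.
  by apply: dvdp_add => //; apply: dvdp_XnW hS'D.
split => //.
- exists d => //; split => //.
  + have -> : U' * S'^`() - 1 = U' * (S' - Sx)^`() + (U' * Sx^`() - 1) by rewrite derivB; ring.
    by apply: dvdp_add => //; apply/dvdp_mull/dvdp_Xn_deriv.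
  + have -> : V' ^+ 2 - (H \Po S') = (V' ^+ 2 - (H \Po Sx)) - ((H \Po S') - (H \Po Sx)) by ring.
    apply: dvdp_sub => //; apply: dvdp_XnW (leqnSn d) (dvdp_trans hS'S _).
    exact: dvdp_comp_sub.
- have -> : defect Gm H S' = (defect Gm H S' - defect Gm H D) + defect Gm H D by ring.
  by apply: dvdp_add => //; apply: dvdp_defect_sub.
- have -> : S' - (alpha%:P + beta *: 'X) = (S' - Sx) + (Sx - (alpha%:P + beta *: 'X)) by ring.
  by apply: dvdp_add => //; apply: dvdp_XnW (leqW d2) hS'S.
Qed.

Lemma newton_loop_inv fuel st : newton_inv st -> (mu.-1 <= st_d st + fuel)%N ->
  newton_inv (nloop mu H G fuel st) /\ (mu.-1 <= st_d (nloop mu H G fuel st))%N.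
Proof.
elim: fuel st => [|n IH] st hI hf /=; first by rewrite addn0 in hf.
case: ifP => hd; last by rewrite leqNgt hd.
apply: IH; first exact: newton_step_inv.
by case: st hI hf hd => d U J V Sx [d2 _ _ _] /= hf hd; lia.
Qed.

Lemma beta_neq0 : beta != 0.
Proof. by apply: contraNneq hG0 => b0; rewrite -hb b0 expr0n. Qed.

Lemma newton_init_inv : newton_inv (ninit alpha beta H G).
Proof.
rewrite /ninit /=; set c := _ / _; set a := beta *: 'X + c *: 'X^2.
rewrite -addrA -/a; set S0 := alpha%:P + a.
have [a0 a1 a2] : [/\ a`_0 = 0, a`_1 = beta & a`_2 = c].
  by rewrite !coefD !coefZ !coefX !coefXn /= !mulr0 !mulr1 !addr0 add0r.
have [W0 W1] : (H \Po S0)`_0 = 1 /\ (H \Po S0)`_1 = H^`().[alpha] * beta.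
  have /dvdp_XnP hW := dvdp_X2_comp H alpha a0; rewrite Ha in hW.
  split; [move: (hW 0%N isT) | move: (hW 1%N isT)];
    by rewrite coefB !coefD coefZ coefC /= ?a0 ?a1 ?mulr0 ?addr0 ?add0r => /subr0_eq.
have [D0 D1] : S0^`()`_0 = beta /\ S0^`()`_1 = c *+ 2.
  by rewrite !coef_deriv !(coefD alpha%:P a) !coefC a1 a2 /= !add0r.
split => //.
- exists 1%N => //; split; last by rewrite mulr1 subrr dvdp0.
  + apply/(dvdp_XnP 1) => -[|] // _.
    by rewrite coefB coef0M coefC D0 /= coef1 mulVf ?beta_neq0 ?subrr.
  + by apply/(dvdp_XnP 1) => -[|] // _; rewrite coefB W0 expr1n coef1 subrr.
- apply/dvdp_XnP => -[|[|i]] hi; last by move: hi; rewrite leq_min => /andP[].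
    by rewrite coefB coef0M W0 expr2 coef0M D0 coef_poly mu1 mulr1 -hb subrr.
  have mu3 : (2 < mu)%N by move: hi; rewrite leq_min; case/andP => _; case: (mu) => [|[|]].
  rewrite coefB expr2 !coefM !big_ord_recr !big_ord0 /= !add0r W0 W1 D0 D1.
  rewrite !coef_poly mu1 (ltn_trans _ mu3) // -hb /c.
  have f4 : (4 : K) != 0 by rewrite -[4]/(2 * 2)%:R natrM mulf_neq0 ?(two_neq0 hp).
  by rewrite !mulr2n; field; rewrite beta_neq0 f4.
- rewrite /S0 /a addrA [_ + c *: _]addrC addrK -mul_polyC.
  exact/dvdp_mull/dvdpp.
Qed.

Lemma newton_output_spec : let S := newton_output mu alpha beta H G in
  [/\ S`_0 = alpha, S`_1 = beta & 'X^(mu.-1) %| defect Gm H S].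
Proof.
have [] := newton_loop_inv (fuel := mu) newton_init_inv (leq_trans (leq_pred _) (leq_addl _ _)).
rewrite /newton_output; case: (nloop _ _ _ _ _) => d U J V Sx [_ _ hE hS] /= hd.
rewrite (minn_idPr hd) in hE; move/dvdp_XnP: hS => hS.
split => //; [move: (hS 0%N isT) | move: (hS 1%N isT)];
  by rewrite coefB coefD coefC coefZ coefX /= ?mulr0 ?mulr1 ?addr0 ?add0r => /subr0_eq.
Qed.

Lemma is_solution_modP S : is_solution_mod mu alpha beta H G S <->
  [/\ S 0%N = alpha, S 1%N = beta & 'X^(mu.-1) %| defect Gm H (trunc_series mu S)].
Proof.
rewrite /is_solution_mod -dvdpNr opprB dvdp_Xn_take.
by split=> -[h0 h1 /eqP hE].
Qed.

Lemma newton_output_solution :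
  is_solution_mod mu alpha beta H G (fun i => (newton_output mu alpha beta H G)`_i).
Proof.
have [o0 o1 hE] := newton_output_spec; apply/is_solution_modP; split => //.
set S := newton_output _ _ _ _ _.
change (trunc_series mu (fun i => S`_i)) with (take_poly mu S).
rewrite -[defect _ _ (take_poly _ _)](subrK (defect Gm H S)); apply: dvdp_add hE.
by apply: dvdp_defect_sub; rewrite prednK //; apply: dvdp_Xn_take_sub.
Qed.

Lemma solution_uniq Sa Sb :
    is_solution_mod mu alpha beta H G Sa -> is_solution_mod mu alpha beta H G Sb ->
  trunc_series mu Sa = trunc_series mu Sb.
Proof.
move=> /is_solution_modP[a0 a1 hA] /is_solution_modP[b0 b1 hB].
set A := trunc_series mu Sa in hA *; set B := trunc_series mu Sb in hB *.
have cA i : A`_i = if (i < mu)%N then Sa i else 0 by rewrite coef_poly.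
have cB i : B`_i = if (i < mu)%N then Sb i else 0 by rewrite coef_poly.
have hAB : 'X^mu %| A - B.
  have [mu_le1 | mu_gt1] := leqP mu 1.
    apply: dvdp_XnW mu_le1 _; apply/(dvdp_XnP 1) => -[|] // _.
    by rewrite coefB cA cB mu1 a0 b0 subrr.
  rewrite -(prednK mu1); apply: (defect_uniq hp p2) hA hB.
  - by rewrite prednK.
  - by rewrite cA cB mu1 a0 b0.
  - by rewrite cA cB mu_gt1 a1 b1 -mulr2n -mulr_natr mulf_neq0 ?beta_neq0 ?(two_neq0 hp).
apply/polyP => i; move/dvdp_XnP: hAB => /(_ i).
by rewrite coefB cA cB; case: ifP => // _ /(_ isT) /subr0_eq.
Qed.

End NewtonAlgorithm.

Theorem proposition3p1 (K : finFieldType) (p : nat) (alpha beta : K)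
    (G : series K) (H : {poly K}) (mu : nat) :
  p \in [pchar K] -> (3 < p)%N ->
  H.[alpha] = 1 -> beta ^+ 2 = G 0%N -> G 0%N != 0 ->
  (1 <= mu <= p)%N ->
  (exists S : series K, is_solution_mod mu alpha beta H G S) /\
  (forall S : series K, is_solution_mod mu alpha beta H G S ->
     take_poly mu (newton_output mu alpha beta H G) = trunc_series mu S).
Proof.
move=> hp p3 Ha hb hG0 /andP[mu1 mup].
have p2 : (2 < p)%N := ltnW p3.
have sol := newton_output_solution hp p2 Ha hb hG0 mu1 mup.
split; first by eexists; exact: sol.
by move=> S; apply: (solution_uniq hp p2 hb hG0 mu1 mup sol).
Qed.
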